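(* Let $K \ge 2$ be an integer and let $\tilde{\mathbf A} \in \mathbb{R}^{2K^2 \times K^2}$ be the real lifted shear operator defined in the context. Let $\tilde{\mathbf B} \in \mathbb{R}^{K^2 \times 2K^2}$, $\tilde{\boldsymbol\gamma} \in \mathbb{R}^{2K^2}$, $\tau > 0$, and let $D : \mathbb{R}^{K^2} \to \mathbb{R}^{K^2}$ be a map (the denoiser). Set $\mathbb V := (\ker \tilde{\mathbf B}\tilde{\mathbf A})^\perp \subset \mathbb{R}^{K^2}$. Define the forward operator $F_{\tilde{\boldsymbol\gamma}}(\boldsymbol\kappa',\tau) := \boldsymbol\kappa' + \tau \tilde{\mathbf B}(\tilde{\boldsymbol\gamma} - \tilde{\mathbf A}\boldsymbol\kappa')$ for $\boldsymbol\kappa' \in \mathbb{R}^{K^2}$, and the operator $T_{\tilde{\boldsymbol\gamma}}(\cdot,\tau) := D \circ F_{\tilde{\boldsymbol\gamma}}(\cdot,\tau)$. Assume: (i) $D$ maps $\mathbb V$ into $\mathbb V$; (ii) $D$ is non-expansive on $\mathbb V$, i.e. $\|D(\mathbf x) - D(\mathbf y)\| \le \beta \|\mathbf x - \mathbf y\|$ for all $\mathbf x, \mathbf y \in \mathbb V$ for some $\beta \le 1$; (iii) $\tilde{\mathbf B}\tilde{\mathbf A}$ is symmetric positive semidefinite (and nonzero); (iv) $\operatorname{im} \tilde{\mathbf B} \subset \mathbb V$; (v) letting $\lambda_{\min}$ and $\lambda_{\max} = \|\tilde{\mathbf B}\tilde{\mathbf A}\|$ denote respectively the smallest and largest nonzero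 eigenvalues of $\tilde{\mathbf B}\tilde{\mathbf A}$, and $\rho^\star := \frac{\lambda_{\max} - \lambda_{\min}}{\lambda_{\max} + \lambda_{\min}}$, we have for some fixed $\rho \in [\rho^\star, 1)$ that $$\frac{1-\rho}{\lambda_{\min}} \le \tau \le \frac{1+\rho}{\lambda_{\max}}.$$ Then $T_{\tilde{\boldsymbol\gamma}}(\cdot,\tau)$ admits a unique fixed point $\hat{\boldsymbol\kappa} \in \mathbb V$. Moreover, for any $\boldsymbol\kappa^{(0)} \in \mathbb V$, the sequence defined by $\boldsymbol\kappa^{(k+1)} = T_{\tilde{\boldsymbol\gamma}}(\boldsymbol\kappa^{(k)},\tau)$ converges linearly to $\hat{\boldsymbol\kappa}$ with rate $\rho$, i.e. $\|\boldsymbol\kappa^{(k)} - \hat{\boldsymbol\kappa}\| \le \rho^k \|\boldsymbol\kappa^{(0)} - \hat{\boldsymbol\kappa}\|$ for all $k \in \mathbb N$.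
   Context: Vectors in $\mathbb{R}^{K^2}$ or $\mathbb{C}^{K^2}$ represent $K\times K$ images flattened, with pixel $(k_1,k_2)$, $0\le k_1,k_2\le K-1$, at index $Kk_1+k_2$. Let $\mathbf F \in \mathbb{C}^{K^2\times K^2}$ be the (unitary) 2D discrete Fourier transform and $\mathbf F^{H}$ its conjugate transpose. Let $\mathbf P$ be the diagonal matrix with $\mathbf P[0,0]=0$ and $\mathbf P[Kk_1+k_2, Kk_1+k_2] = \frac{(k_1 + i k_2)^2}{k_1^2+k_2^2}$ for $(k_1,k_2) \ne (0,0)$. Set $\mathbf A := \mathbf F^H \mathbf P \mathbf F \in \mathbb{C}^{K^2\times K^2}$ and $\tilde{\mathbf A} := \begin{pmatrix} \operatorname{Re}\mathbf A \\ \operatorname{Im}\mathbf A\end{pmatrix} \in \mathbb{R}^{2K^2\times K^2}$. Norms are Euclidean norms (operator norm for matrices). *)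

From HB Require Import structures.
From mathcomp Require Import all_boot all_order all_algebra.
From mathcomp Require Import reals trigo.
From mathcomp Require Import complex.
Set Implicit Arguments. Unset Strict Implicit. Unset Printing Implicit Defensive.
Import Order.TTheory GRing.Theory Num.Theory.
Local Open Scope ring_scope.

Notation C R := (complex.complex R).

Section Shear.
Variable R : realType.
Variable K : nat.

Definition pix1 (i : 'I_(K * K)) : nat := (i %/ K)%N.
Definition pix2 (i : 'I_(K * K)) : nat := (i %% K)%N.

Definition cexp (t : R) : C R := complex.Complex (cos t) (sin t).

Definition DFT2 : 'M[C R]_(K * K) :=
  \matrix_(i, j)
    (complex.Complex (K%:R)^-1 0 * cexp (- (2 * pi) * ((pix1 i * pix1 j + pix2 i * pix2 j)%N%:R)
                           / K%:R))%R.

Definition conjT (M : 'M[C R]_(K * K)) : 'M[C R]_(K * K) :=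
  \matrix_(i, j) complex.conjc (M j i).

Definition Pdiag : 'M[C R]_(K * K) :=
  \matrix_(i, j)
    (if i == j then
       (if ((pix1 i == 0) && (pix2 i == 0))%N then 0
        else (complex.Complex (pix1 i)%:R (pix2 i)%:R) ^+ 2
             / complex.Complex ((pix1 i ^ 2 + pix2 i ^ 2)%N%:R) 0)
     else 0).

Definition Ashear : 'M[C R]_(K * K) := conjT DFT2 *m Pdiag *m DFT2.

Definition Atilde : 'M[R]_(K * K + K * K, K * K) :=
  col_mx (map_mx (@complex.Re R) Ashear) (map_mx (@complex.Im R) Ashear).

End Shear.

Section Euclid.
Variable R : realType.
Variable n : nat.

Definition dotv (x y : 'cV[R]_n) : R := \sum_i x i 0 * y i 0.
Definition norm2 (x : 'cV[R]_n) : R := Num.sqrt (dotv x x).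

Definition ker_perp m (M : 'M[R]_(m, n)) (x : 'cV[R]_n) : Prop :=
  forall y : 'cV[R]_n, M *m y = 0 -> dotv x y = 0.
End Euclid.

From HB Require Import structures.
From mathcomp Require Import all_boot all_order all_algebra.
From mathcomp Require Import reals complex sesquilinear spectral ring lra.
From mathcomp Require Import classical_sets.
Import Order.TTheory GRing.Theory Num.Theory.
Set Implicit Arguments. Unset Strict Implicit. Unset Printing Implicit Defensive.
Local Open Scope ring_scope.

(* Write [F] for the gradient step [x |-> x + tau B (gamma - A x)], so that
   [F x - F y = (1 - tau BA)(x - y)].  The set [V] is the range of the symmetric
   matrix [BA]; diagonalising [BA], on [V] the map [1 - tau BA] has norm at most
   [max |1 - tau lambda|] over the nonzero eigenvalues [lambda], and the step-size
   window [(1 - rho)/lmin <= tau <= (1 + rho)/lmax] makes this at most [rho].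
   Composed with the non-expansive [D], the operator [T] is thus a [rho]-contraction
   of the closed invariant subspace [V], and the Banach fixed point argument (with
   limits taken coordinatewise, as suprema in [R]) gives the unique fixed point and
   the linear rate. *)

Section Geometric.
Variable R : realType.
Local Open Scope classical_set_scope.
Implicit Types q x E c : R.

Lemma exprn_bernoulli q n : 0 <= q -> q <= 1 -> q ^+ n * (1 + n%:R * (1 - q)) <= 1.
Proof.
move=> q0 q1; elim: n => [|n IH]; first by rewrite expr0 mul0r addr0 mul1r.
have qn0 : 0 <= q ^+ n := exprn_ge0 n q0.
have qn1 : q ^+ n <= 1 := exprn_ile1 n q0 q1.
have qIH : q * (q ^+ n * (1 + n%:R * (1 - q))) <= q := ler_piMr q0 IH.
have : 0 <= (1 - q) * (1 - q * q ^+ n) by apply: mulr_ge0; nra.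
by rewrite exprS -nat1r; nra.
Qed.

Lemma le0_geometric x E q : 0 <= q < 1 -> (forall n, x <= E * q ^+ n) -> x <= 0.
Proof.
case/andP=> q0 q1 xE; rewrite leNgt; apply/negP => x0.
have xE0 : x <= E by have := xE 0%N; rewrite expr0 mulr1.
have Ex0 : 0 <= E / (x * (1 - q)) by apply: divr_ge0; nra.
(* Bernoulli bounds [q ^+ m] by [1 / (1 + m (1 - q))]; take [m (1 - q) x > E]. *)
pose m := Num.bound (E / (x * (1 - q))).
have Em : E < m%:R * (x * (1 - q)).
  by rewrite -ltr_pdivrMr ?(archi_boundP Ex0) //; nra.
have m0 : 0 <= m%:R :> R := ler0n _ m.
have c0 : 0 <= 1 + m%:R * (1 - q) by nra.
have := exprn_bernoulli m q0 (ltW q1).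
have qm0 : 0 <= q ^+ m := exprn_ge0 m q0.
have := ler_wpM2r c0 (xE m); set p := q ^+ m in qm0 *.
nra.
Qed.

Lemma eq0_geometric x E q : 0 <= q < 1 -> (forall n, `|x| <= E * q ^+ n) -> x = 0.
Proof.
move=> q01 /(le0_geometric q01) x0.
by apply/normr0_eq0/eqP; rewrite eq_le x0 normr_ge0.
Qed.

Lemma geometric_cauchy_limit (u : nat -> R) c q : 0 <= q < 1 ->
    (forall k, `|u k.+1 - u k| <= c * q ^+ k) ->
  exists l, forall k, `|u k - l| <= c / (1 - q) * q ^+ k.
Proof.
case/andP=> q0 q1 du; set C := c / (1 - q).
have c0 : 0 <= c by have := du 0%N; rewrite expr0 mulr1; apply: le_trans.
have C0 : 0 <= C by rewrite divr_ge0 // subr_ge0 ltW.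
have CqS k : C * q ^+ k - C * q ^+ k.+1 = c * q ^+ k.
  by rewrite /C exprS; field; rewrite subr_eq0 gt_eqF.
(* [u k -/+ C q^k] are monotone and interleaved; the limit is the sup of the lower one. *)
pose lo k := u k - C * q ^+ k; pose hi k := u k + C * q ^+ k.
have lo_hi k : lo k <= hi k.
  by rewrite lerD2l; have := mulr_ge0 C0 (exprn_ge0 k q0); lra.
have lo_incr : {homo lo : i j / (i <= j)%N >-> i <= j}.
  apply: homo_leq => [//|y x z|k]; first exact: le_trans.
  by have := du k; have := CqS k; rewrite ler_norml /lo; lra.
have hi_decr : {homo hi : i j / (i <= j)%N >-> j <= i}.
  apply: homo_leq => [//|y x z xy yz|k]; first exact: le_trans yz xy.
  by have := du k; have := CqS k; rewrite ler_norml /hi; lra.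
have lo_ub n m : lo n <= hi m.
  apply: le_trans (lo_incr _ _ (leq_maxl n m)) _.
  exact: le_trans (lo_hi _) (hi_decr _ _ (leq_maxr n m)).
have lo_ne0 : range lo !=set0 by exists (lo 0%N), 0%N.
have lo_sup : has_sup (range lo).
  by split => //; exists (hi 0%N) => _ [n _ <-]; apply: lo_ub.
exists (sup (range lo)) => k; rewrite distrC ler_distl; apply/andP; split.
  by apply: sup_upper_bound => //; exists k.
by apply: ge_sup => // _ [n _ <-]; apply: lo_ub.
Qed.

End Geometric.

Section Euclid.
Variables (R : realType) (n : nat).
Implicit Types x y z : 'cV[R]_n.

Lemma dotvE x y : dotv x y = (x^T *m y) 0 0.
Proof. by rewrite mxE; apply: eq_bigr => i _; rewrite mxE. Qed.

Lemma dotvDl x y z : dotv (x + y) z = dotv x z + dotv y z.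
Proof. by rewrite !dotvE linearD mulmxDl mxE. Qed.

Lemma dotvZl a x y : dotv (a *: x) y = a * dotv x y.
Proof. by rewrite !dotvE linearZ -scalemxAl mxE. Qed.

Lemma dotvBl x y z : dotv (x - y) z = dotv x z - dotv y z.
Proof. by rewrite dotvDl -scaleN1r dotvZl mulN1r. Qed.

Lemma dotvZr a x y : dotv x (a *: y) = a * dotv x y.
Proof. by rewrite !dotvE -scalemxAr mxE. Qed.

Lemma dotv_ge0 x : 0 <= dotv x x.
Proof. by apply: sumr_ge0 => i _; rewrite -expr2 sqr_ge0. Qed.

Lemma dotv_eq0 x : (dotv x x == 0) = (x == 0).
Proof.
apply/idP/eqP => [|->]; last by rewrite /dotv big1 // => i _; rewrite mxE mul0r.
rewrite psumr_eq0 => [/allP x0|i _]; last by rewrite -expr2 sqr_ge0.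
apply/matrixP => i j; rewrite ord1 mxE; apply/eqP.
by have := x0 i (mem_index_enum _); rewrite -expr2 sqrf_eq0.
Qed.

Lemma norm2_ge0 x : 0 <= norm2 x.
Proof. exact: sqrtr_ge0. Qed.

Lemma norm2_eq0 x : (norm2 x == 0) = (x == 0).
Proof. by rewrite sqrtr_eq0 le_eqVlt ltNge dotv_ge0 orbF dotv_eq0. Qed.

Lemma norm2_le_dotv a x y : 0 <= a -> dotv x x <= a ^+ 2 * dotv y y ->
  norm2 x <= a * norm2 y.
Proof.
move=> a0 xy; rewrite /norm2 -[a]ger0_norm // -sqrtr_sqr -sqrtrM ?sqr_ge0 //.
by rewrite ler_sqrt // mulr_ge0 ?sqr_ge0 ?dotv_ge0.
Qed.

Lemma normr_coord_le_norm2 x i : `|x i 0| <= norm2 x.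
Proof.
rewrite -(sqrtr_sqr (x i 0)) ler_sqrt ?dotv_ge0 // /dotv (bigD1 i) //= -expr2 lerDl.
by apply: sumr_ge0 => j _; rewrite -expr2 sqr_ge0.
Qed.

Lemma norm2_le_coord x e : 0 <= e -> (forall i, `|x i 0| <= e) ->
  norm2 x <= Num.sqrt n%:R * e.
Proof.
move=> e0 xe; rewrite /norm2 -(ger0_norm e0) -sqrtr_sqr -sqrtrM ?ler0n //.
rewrite ler_sqrt ?mulr_ge0 ?ler0n ?sqr_ge0 //.
rewrite mulr_natl -{2}[n]card_ord -sumr_const; apply: ler_sum => i _.
by rewrite -expr2 -real_normK ?num_real // lerXn2r ?nnegrE ?normr_ge0.
Qed.

End Euclid.

Section KerPerp.
Context {R : realType} {m n : nat} (M : 'M[R]_(m, n)).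
Local Notation V := (ker_perp M).

Lemma ker_perp0 : V 0.
Proof. by move=> y _; rewrite dotvE trmx0 mul0mx mxE. Qed.

Lemma ker_perpD x y : V x -> V y -> V (x + y).
Proof. by move=> Vx Vy z Mz; rewrite dotvDl Vx ?Vy ?addr0. Qed.

Lemma ker_perpZ a x : V x -> V (a *: x).
Proof. by move=> Vx z Mz; rewrite dotvZl Vx ?mulr0. Qed.

Lemma ker_perpB x y : V x -> V y -> V (x - y).
Proof. by move=> Vx Vy; rewrite -scaleN1r; apply/ker_perpD/ker_perpZ. Qed.

Lemma ker_perp_closed (y : nat -> 'cV[R]_n) (l : 'cV[R]_n) (c q : R) : 0 <= q < 1 ->
    (forall k, V (y k)) -> (forall k i, `|l i 0 - y k i 0| <= c * q ^+ k) -> V l.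
Proof.
move=> q01 Vy ly z Mz; apply: (@eq0_geometric _ _ (c * \sum_i `|z i 0|) q) => // k.
have -> : dotv l z = dotv (l - y k) z by rewrite dotvBl Vy // subr0.
rewrite /dotv -mulrA mulr_suml mulr_sumr.
apply: le_trans (ler_norm_sum _ _ _) _; apply: ler_sum => i _.
by rewrite normrM [leRHS]mulrCA [leLHS]mulrC ler_wpM2l // !mxE.
Qed.

End KerPerp.

(* [z^T <= M] means [z^T *m cokermx M = 0], and the columns of [cokermx M] lie in
   the kernel of [M]. *)
Lemma ker_perp_row_space (R : realType) m n (M : 'M[R]_(m, n)) z :
  ker_perp M z -> (z^T <= M)%MS.
Proof.
move=> Mz; rewrite submxE; apply/eqP/rowP => j; rewrite !mxE.
rewrite -[RHS](Mz (col j (cokermx M))); last first.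
  apply/colP => i; have /matrixP/(_ i j) := mulmx_coker M; rewrite !mxE.
  by apply: etrans; apply: eq_bigr => k _; rewrite !mxE.
by apply: eq_bigr => i _; rewrite !mxE.
Qed.

Lemma sym_ker_perp_range (R : realType) n (M : 'M[R]_n) z :
  M^T = M -> ker_perp M z -> exists y, z = M *m y.
Proof.
move=> Msym /ker_perp_row_space /submxP [y zE].
by exists y^T; rewrite -[z]trmxK zE trmx_mul Msym.
Qed.

Lemma psd_eigenvalue_ge0 (R : realType) n (M : 'M[R]_n) l :
  M^T = M -> (forall v, 0 <= dotv v (M *m v)) -> eigenvalue M l -> 0 <= l.
Proof.
move=> Msym Mpsd /eigenvalueP [v vM v0].
have Mv : M *m v^T = l *: v^T by rewrite -Msym -trmx_mul vM linearZ.
have vv0 : 0 < dotv v^T v^T by rewrite lt_def dotv_eq0 trmx_eq0 v0 dotv_ge0.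
by have := Mpsd v^T; rewrite Mv dotvZr pmulr_lge0.
Qed.

Lemma spectral_diag_eigenvalue (C : numClosedFieldType) n (A : 'M[C]_n) i :
  A \is normalmx -> eigenvalue A (spectral_diag A 0 i).
Proof.
move=> /orthomx_spectralP AE; set P := spectralmx A in AE.
have PA : P *m A = diag_mx (spectral_diag A) *m P.
  by rewrite {1}AE !mulmxA mulmxV ?spectral_unit // mul1mx.
apply/eigenvalueP; exists (row i P).
  by rewrite -row_mul PA mul_diag_mx; apply/rowP => j; rewrite !mxE.
apply/eqP => Pi0; have Pfree : row_free P by rewrite row_free_unit spectral_unit.
have /matrixP/(_ 0 i)/eqP : delta_mx 0 i = 0 :> 'rV[C]_n.
  by apply: (row_free_inj Pfree); rewrite -rowE Pi0 mul0mx.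
by rewrite !mxE !eqxx oner_eq0.
Qed.

Section RealSymmetric.
Variable R : realType.
Local Notation C := (complex.complex R).
Local Notation rc := (real_complex R).
Local Open Scope sesquilinear_scope.

Definition cnorm2 n (u : 'cV[C]_n) : C := \sum_i `|u i 0| ^+ 2.

Lemma cnorm2E n (u : 'cV[C]_n) : cnorm2 u = (u^t* *m u) 0 0.
Proof. by rewrite mxE; apply: eq_bigr => i _; rewrite normCKC !mxE. Qed.

Lemma cnorm2_unitary n (P : 'M[C]_n) u :
  P \is unitarymx -> cnorm2 (P^t* *m u) = cnorm2 u.
Proof.
move=> /unitarymxP PP.
by rewrite !cnorm2E trmx_mul map_mxM trmxCK mulmxA -(mulmxA _ P) PP mulmx1.
Qed.

Lemma rc_real (r : R) : rc r \is Num.real.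
Proof. by apply/complex_realP; exists r. Qed.

Lemma cnorm2_real n (x : 'cV[R]_n) : cnorm2 (map_mx rc x) = rc (dotv x x).
Proof.
rewrite rmorph_sum; apply: eq_bigr => i _.
by rewrite mxE real_normK ?rc_real // rmorphM expr2.
Qed.

Lemma sym_map_hermsym n (M : 'M[R]_n) : M^T = M -> map_mx rc M \is hermsymmx.
Proof.
move=> Msym; apply: realsym_hermsym; last by apply/mxOverP => i j; rewrite mxE rc_real.
apply/is_hermitianmxP; rewrite expr0 scale1r.
by apply/matrixP => i j; rewrite !mxE -[in LHS]Msym mxE.
Qed.

(* Complexify and diagonalise [M] unitarily: in the eigenbasis the step multiplies the
   i-th coordinate of [M y] by [1 - t d_i], and that coordinate vanishes when [d_i = 0]. *)
Lemma ker_perp_gradient_step_le n (M : 'M[R]_n) (t rho : R) z :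
    M^T = M -> 0 <= rho ->
    (forall r, r != 0 -> eigenvalue M r -> `|1 - t * r| <= rho) ->
  ker_perp M z -> norm2 (z - t *: (M *m z)) <= rho * norm2 z.
Proof.
move=> Msym rho0 eigM /(sym_ker_perp_range Msym) [y ->].
apply: norm2_le_dotv => //; rewrite -lecR -cnorm2_real.
have -> : rc (rho ^+ 2 * dotv (M *m y) (M *m y)) =
    rc (rho ^+ 2) * cnorm2 (map_mx rc (M *m y)) by rewrite cnorm2_real rmorphM.
set Mc := map_mx rc M; have Mc_herm : Mc \is hermsymmx := sym_map_hermsym Msym.
have /orthomx_spectralP McE := hermitian_normalmx Mc_herm.
have Punitary := spectral_unitarymx Mc.
move: McE; rewrite invmx_unitary //.
set P := spectralmx Mc; set d := spectral_diag Mc => McE.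
have PPt : P *m P^t* = 1%:M by apply/unitarymxP.
set a := diag_mx d *m (P *m map_mx rc y).
have My : map_mx rc (M *m y) = P^t* *m a by rewrite map_mxM -/Mc McE !mulmxA.
have MMy : map_mx rc (M *m (M *m y)) = P^t* *m (diag_mx d *m a).
  by rewrite map_mxM My -/Mc McE -!mulmxA (mulmxA P) PPt mul1mx.
rewrite map_mxB map_mxZ My MMy scalemxAr -mulmxBr !cnorm2_unitary //.
rewrite /cnorm2 mulr_sumr; apply: ler_sum => i _.
have ai : a i 0 = d 0 i * (P *m map_mx rc y) i 0 by rewrite /a mul_diag_mx mxE.
have -> : (a - rc t *: (diag_mx d *m a)) i 0 = a i 0 * (1 - rc t * d 0 i).
  by rewrite mul_diag_mx !mxE; ring.
rewrite normrM exprMn mulrC.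
have [r dr] : exists r, d 0 i = rc r.
  by apply/complex_realP; have /mxOverP := hermitian_spectral_diag_real Mc_herm; apply.
have [r0|r0] := eqVneq r 0; first by rewrite ai dr r0 mul0r normr0 expr0n !mulr0.
have eig_r : eigenvalue M r.
  have := spectral_diag_eigenvalue i (hermitian_normalmx Mc_herm).
  by rewrite -/d dr eigenvalue_map.
rewrite ler_wpM2r ?exprn_ge0 ?normr_ge0 // dr -rmorphM -rmorphB real_normK ?rc_real //.
by rewrite -rmorphXn lecR -real_normK ?num_real // ler_sqr ?nnegrE ?normr_ge0 ?eigM.
Qed.
End RealSymmetric.

Lemma cV_geometric_limit (R : realType) n (y : nat -> 'cV[R]_n) c q :
    0 <= q < 1 -> (forall k, norm2 (y k.+1 - y k) <= c * q ^+ k) ->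
  exists l : 'cV[R]_n, forall k i, `|l i 0 - y k i 0| <= c / (1 - q) * q ^+ k.
Proof.
move=> q01 dy.
have /fin_all_exists [l yl] : forall i, exists li : R,
    forall k, `|y k i 0 - li| <= c / (1 - q) * q ^+ k.
  move=> i; apply: geometric_cauchy_limit => // k.
  apply: le_trans (dy k).
  by have := normr_coord_le_norm2 (y k.+1 - y k) i; rewrite !mxE.
by exists (\col_i l i) => k i; rewrite mxE distrC.
Qed.

Section Contraction.
Variables (R : realType) (n : nat) (V : 'cV[R]_n -> Prop).
Variables (T : 'cV[R]_n -> 'cV[R]_n) (q : R).
Hypothesis q_ge0 : 0 <= q.
Hypothesis VT : forall x, V x -> V (T x).
Hypothesis T_contr : forall x y, V x -> V y -> norm2 (T x - T y) <= q * norm2 (x - y).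

Lemma iter_stable k x : V x -> V (iter k T x).
Proof. by move=> Vx; elim: k => //= k; apply: VT. Qed.

Lemma iter_contraction k x y : V x -> V y ->
  norm2 (iter k T x - iter k T y) <= q ^+ k * norm2 (x - y).
Proof.
move=> Vx Vy; elim: k => [|k IH]; first by rewrite expr0 mul1r.
apply: le_trans (T_contr (iter_stable k Vx) (iter_stable k Vy)) _.
by rewrite exprS -mulrA ler_wpM2l.
Qed.

Lemma contraction_fixpoint_unique x y : q < 1 -> V x -> V y ->
  T x = x -> T y = y -> x = y.
Proof.
move=> q1 Vx Vy Tx Ty; apply/eqP; rewrite -subr_eq0 -norm2_eq0.
have := T_contr Vx Vy; rewrite Tx Ty => xy.
by rewrite eq_le norm2_ge0 andbT; have := norm2_ge0 (x - y); nra.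
Qed.

End Contraction.

Lemma ker_perp_contraction_fixpoint (R : realType) m n (M : 'M[R]_(m, n))
    (T : 'cV[R]_n -> 'cV[R]_n) (q : R) : 0 <= q < 1 ->
    (forall x, ker_perp M x -> ker_perp M (T x)) ->
    (forall x y, ker_perp M x -> ker_perp M y ->
       norm2 (T x - T y) <= q * norm2 (x - y)) ->
  exists2 l, ker_perp M l & T l = l.
Proof.
move=> q01 VT T_contr; have /andP [q0 q1] := q01.
pose y k := iter k T 0.
have Vy k : ker_perp M (y k) := iter_stable VT k (ker_perp0 (M := M)).
have dy k : norm2 (y k.+1 - y k) <= norm2 (T 0 - 0) * q ^+ k.
  have V0 : ker_perp M 0 := ker_perp0 (M := M).
  rewrite mulrC /y iterSr; exact: (iter_contraction q0 VT T_contr k (VT _ V0) V0).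
have [l yl] := cV_geometric_limit q01 dy.
set c := norm2 (T 0 - 0) / (1 - q) in yl.
have c0 : 0 <= c by rewrite divr_ge0 ?norm2_ge0 // subr_ge0 ltW.
have Vl : ker_perp M l := ker_perp_closed q01 Vy yl.
exists l => //; apply/matrixP => i j; rewrite ord1; apply/subr0_eq.
apply: (@eq0_geometric _ _ ((q * Num.sqrt n%:R + q) * c) q) => // k.
have -> : T l i 0 - l i 0 = (T l - T (y k)) i 0 + (y k.+1 i 0 - l i 0).
  by rewrite !mxE; ring.
apply: le_trans (ler_normD _ _) _.
have ly : norm2 (l - y k) <= Num.sqrt n%:R * (c * q ^+ k).
  apply: norm2_le_coord => [|i']; first by rewrite mulr_ge0 ?exprn_ge0.
  by rewrite !mxE yl.
have h1 : `|(T l - T (y k)) i 0| <= q * (Num.sqrt n%:R * (c * q ^+ k)).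
  apply: le_trans (normr_coord_le_norm2 _ i) _.
  exact: le_trans (T_contr _ _ Vl (Vy k)) (ler_wpM2l q0 ly).
have h2 : `|y k.+1 i 0 - l i 0| <= c * q ^+ k.+1 by rewrite distrC.
rewrite exprS in h2; lra.
Qed.

Lemma step_size_contraction (R : realType) (t lmin lmax rho r : R) :
    0 < t -> 0 < lmin -> lmin <= r -> r <= lmax ->
    (1 - rho) / lmin <= t -> t <= (1 + rho) / lmax ->
  `|1 - t * r| <= rho.
Proof.
move=> t0 lmin0 lmin_r r_lmax tlo thi.
have lmax0 := lt_le_trans lmin0 (le_trans lmin_r r_lmax).
rewrite ler_pdivrMr // in tlo; rewrite ler_pdivlMr // in thi.
have : t * lmin <= t * r by rewrite ler_pM2l.
have : t * r <= t * lmax by rewrite ler_pM2l.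
by rewrite ler_norml; lra.
Qed.

Theorem proposition1 (R : realType) (K : nat) (hK : (2 <= K)%N)
  (B : 'M[R]_(K * K, K * K + K * K)) (gamma : 'cV[R]_(K * K + K * K))
  (tau : R) (htau : 0 < tau)
  (D : 'cV[R]_(K * K) -> 'cV[R]_(K * K))
  (lmin lmax rho : R) :
  let BA := B *m Atilde R K in
  let V := ker_perp BA in
  let Fw := fun kap : 'cV[R]_(K * K) => kap + tau *: (B *m (gamma - Atilde R K *m kap)) in
  let T := fun kap => D (Fw kap) in
  (* (i) *) (forall x, V x -> V (D x)) ->
  (* (ii) *) (exists beta : R, beta <= 1 /\
       forall x y, V x -> V y -> norm2 (D x - D y) <= beta * norm2 (x - y)) ->
  (* (iii) *) BA^T = BA -> (forall v : 'cV[R]_(K * K), 0 <= dotv v (BA *m v)) ->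
     BA != 0 ->
  (* (iv) *) (forall w : 'cV[R]_(K * K + K * K), V (B *m w)) ->
  (* (v) lmin, lmax: smallest / largest nonzero eigenvalues of BA *)
  lmin != 0 -> eigenvalue BA lmin ->
  (forall l, l != 0 -> eigenvalue BA l -> lmin <= l) ->
  lmax != 0 -> eigenvalue BA lmax ->
  (forall l, l != 0 -> eigenvalue BA l -> l <= lmax) ->
  (lmax - lmin) / (lmax + lmin) <= rho -> rho < 1 ->
  (1 - rho) / lmin <= tau -> tau <= (1 + rho) / lmax ->
  exists khat : 'cV[R]_(K * K),
    [/\ V khat, T khat = khat,
        (forall k', V k' -> T k' = k' -> k' = khat) &
        forall k0, V k0 -> forall k : nat,
          norm2 (iter k T k0 - khat) <= rho ^+ k * norm2 (k0 - khat)].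
Proof.
move=> BA V Fw T DV [beta [beta1 D_lip]] BAsym BApsd _ BV lmin0 lmin_eig lmin_le
  _ _ le_lmax _ rho1 tau_lo tau_hi.
have lmin_gt0 : 0 < lmin.
  by rewrite lt_def lmin0 (psd_eigenvalue_ge0 BAsym BApsd lmin_eig).
have step_eig r : r != 0 -> eigenvalue BA r -> `|1 - tau * r| <= rho.
  move=> r0 er; exact: (step_size_contraction htau lmin_gt0 (lmin_le r r0 er)
    (le_lmax r r0 er) tau_lo tau_hi).
have rho0 : 0 <= rho := le_trans (normr_ge0 _) (step_eig _ lmin0 lmin_eig).
have VF x : V x -> V (Fw x) by move=> Vx; apply/ker_perpD/ker_perpZ/BV.
have VT x : V x -> V (T x) by move=> /VF /DV.
have Fw_diff x y : Fw x - Fw y = (x - y) - tau *: (BA *m (x - y)).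
  by rewrite /Fw /BA !mulmxBr !mulmxA; apply/matrixP => i j; rewrite !mxE; ring.
have T_contr x y : V x -> V y -> norm2 (T x - T y) <= rho * norm2 (x - y).
  move=> Vx Vy; apply: le_trans (D_lip _ _ (VF _ Vx) (VF _ Vy)) _.
  apply: le_trans (ler_wpM2r (norm2_ge0 _) beta1) _.
  rewrite mul1r Fw_diff; apply: ker_perp_gradient_step_le => //.
  exact: ker_perpB.
have rho01 : 0 <= rho < 1 by rewrite rho0.
have [khat Vkhat Tkhat] := ker_perp_contraction_fixpoint rho01 VT T_contr.
exists khat; split => // [k' Vk' Tk'|k0 Vk0 k].
  exact: (contraction_fixpoint_unique T_contr rho1 Vk' Vkhat Tk' Tkhat).
rewrite -{1}(iter_fix k Tkhat).
exact: (iter_contraction rho0 VT T_contr k Vk0 Vkhat).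
Qed.
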